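(* Let $\gamma:[0,1]\to\mathbb{R}^2$ be a $C^1$ curve of constant speed $c>0$ with $\gamma(0)\neq\gamma(1)$, whose turning angle function $\theta$ satisfies $\theta(1)-\theta(0)=2\pi m$ with $0\neq m\in\mathbb{Z}$. Let $\sigma\in S_k$ and $z_h\in Z_k$. Then $\gamma$ is $(k,1)$-rearrangeable with respect to $\sigma$ if and only if $\gamma$ is $(k,1)$-rearrangeable with respect to the composition $\sigma\cdot z_h$ (defined by $(\sigma\cdot z_h)(i)=\sigma(z_h(i))$).
   Context: A turning angle function is a continuous $\theta$ with $\gamma'(s)=c(\cos\theta(s),\sin\theta(s))$. Concatenation $\alpha*\beta$ of two $C^1$ planar curves of the same constant speed ($\alpha$ on $[a_1,b_1]$, $\beta$ on $[a_2,b_2]$) is the curve equal to $\alpha(s+a_1)$ for $s\le b_1-a_1$ and to $T(\beta(s-(b_1-a_1)+a_2))$ afterwards, where $T$ is the orientation-preserving rigid motion sending $\beta(a_2)$ to $\alpha(b_1)$ and the unit tangent of $\beta$ at $a_2$ to that of $\alpha$ at $b_1$; it is associative. Let $D_k=\{(c_1,\dots,c_{k-1})\in[0,1]^{k-1}: 0\le c_1\le\dots\le c_{k-1}\le 1\}$; set $c_0=0$, $c_k=1$. For $C\in D_k$ let $\gamma_i$ be the restriction of $\gamma$ to $[c_{i-1},c_i]$ (degenerate arcs are points carrying the tangent direction of $\gamma$). For $\sigma\in S_k$, $r_{\sigma,C}:=\gamma_{\sigma(1)}*\dots*\gamma_{\sigma(k)}$ over $[0,1]$. $\gamma$ is $(k,1)$-rearrangeable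 with respect to $\sigma$ if there exist $C\in D_k$ such that $r_{\sigma,C}$ is a closed $C^1$ curve (end point equals start point and the tangents there agree). $Z_k=\{z_0,\dots,z_{k-1}\}$ with $z_h(i)=i+h$ if $i\le k-h$ and $z_h(i)=i+h-k$ if $i>k-h$. *)

From Stdlib Require Import Reals ZArith.
From mathcomp Require Import all_boot all_fingroup.
From mathcomp Require Import ssralg zmodp.

Set Implicit Arguments.
Unset Strict Implicit.
Unset Printing Implicit Defensive.

Local Open Scope R_scope.

(* Points / vectors of the plane R^2, identified with complex numbers so that
   rotations are multiplications by unit complex numbers. *)
Definition pt := (R * R)%type.
Definition padd (u v : pt) : pt := (u.1 + v.1, u.2 + v.2).
Definition psub (u v : pt) : pt := (u.1 - v.1, u.2 - v.2).
Definition cmul (u v : pt) : pt := (u.1 * v.1 - u.2 * v.2, u.1 * v.2 + u.2 * v.1).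
Definition pnorm (u : pt) : R := sqrt (u.1 * u.1 + u.2 * u.2).
Definition pscale (r : R) (u : pt) : pt := (r * u.1, r * u.2).
Definition cdiv (u v : pt) : pt :=
  pscale (/ (v.1 * v.1 + v.2 * v.2)) (cmul u (v.1, - v.2)).
Definition unitv (u : pt) : pt := pscale (/ pnorm u) u.

Definition rigid (w t : pt) (x : pt) : pt := padd (cmul w x) t.

Definition has_deriv01 (f df : R -> pt) : Prop :=
  forall s, 0 <= s <= 1 -> forall eps, 0 < eps -> exists delta, 0 < delta /\
    forall t, 0 <= t <= 1 -> t <> s -> Rabs (t - s) < delta ->
      Rabs ((fst (f t) - fst (f s)) / (t - s) - fst (df s)) < eps /\
      Rabs ((snd (f t) - snd (f s)) / (t - s) - snd (df s)) < eps.

Definition cont01 (g : R -> R) : Prop :=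
  forall s, 0 <= s <= 1 -> forall eps, 0 < eps -> exists delta, 0 < delta /\
    forall t, 0 <= t <= 1 -> Rabs (t - s) < delta -> Rabs (g t - g s) < eps.

(* ---------- Rearrangements ----------
   Indices are 0-based: 'I_k = {0,..,k-1} stands for the paper's {1,..,k}
   (paper index i <-> our i-1).  We take k = n.+1.
   A cut sequence C in D_k is a function cp : nat -> R with cp 0 = 0,
   cp k = 1 and cp 0 <= cp 1 <= ... <= cp k; arc number j ('I_k) is the
   restriction of gamma to [cp j, cp (j+1)]. *)

Definition cuts (k : nat) (cp : nat -> R) : Prop :=
  cp 0%N = 0 /\ cp k = 1 /\ forall i, (i < k)%N -> cp i <= cp i.+1.

Section Rearr.
Variables (gam dgam : R -> pt) (n : nat) (sigma : {perm 'I_n.+1}) (cp : nat -> R).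

(* the p-th arc of the concatenation is gamma_{sigma(p)} *)
Definition sidx (p : nat) : nat := nat_of_ord (sigma (inord p)).
Definition arc_a (p : nat) : R := cp (sidx p).
Definition arc_b (p : nat) : R := cp (sidx p).+1.
Definition arc_len (p : nat) : R := arc_b p - arc_a p.

Fixpoint start_time (p : nat) : R :=
  match p with 0%N => 0 | q.+1 => start_time q + arc_len q end.

(* rigid motion (w, t) applied to the p-th arc: identity for the first arc;
   the motion for arc q+1 sends gamma(arc_a (q+1)) to the (moved) end point
   of arc q, and the unit tangent of gamma at arc_a (q+1) to the (moved)
   unit tangent of gamma at arc_b q.  By associativity of *, this left fold
   is the concatenation gamma_{sigma 1} * ... * gamma_{sigma k}. *)
Fixpoint motion (p : nat) : pt * pt :=
  match p with
  | 0%N => ((1, 0), (0, 0))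
  | q.+1 =>
      let w := (motion q).1 in
      let t := (motion q).2 in
      let w' := cmul w (cdiv (unitv (dgam (arc_b q))) (unitv (dgam (arc_a q.+1)))) in
      let t' := psub (rigid w t (gam (arc_b q))) (cmul w' (gam (arc_a q.+1))) in
      (w', t')
  end.

(* the arc to which parameter s belongs: the largest p <= n with
   start_time p <= s (0 if none) *)
Fixpoint pick (p : nat) (s : R) : nat :=
  match p with
  | 0%N => 0%N
  | q.+1 => if Rle_dec (start_time q.+1) s then q.+1 else pick q s
  end.
Definition piece (s : R) : nat := pick n s.

Definition rcurve (s : R) : pt :=
  let p := piece s in
  rigid (motion p).1 (motion p).2 (gam (arc_a p + (s - start_time p))).
Definition rtangent (s : R) : pt :=
  let p := piece s in
  cmul (motion p).1 (dgam (arc_a p + (s - start_time p))).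

Definition closed_rearr : Prop :=
  rcurve 1 = rcurve 0 /\ rtangent 1 = rtangent 0.
End Rearr.

Definition rearrangeable (gam dgam : R -> pt) (n : nat) (sigma : {perm 'I_n.+1}) : Prop :=
  exists cp : nat -> R, cuts n.+1 cp /\ closed_rearr gam dgam sigma cp.

Definition zperm (n : nat) (h : 'I_n.+1) : {perm 'I_n.+1} :=
  perm (@GRing.addIr _ h).

(* (sigma . tau)(i) = sigma (tau i); note MathComp's (tau * sigma) x = sigma (tau x) *)
Definition comp_perm (n : nat) (sigma tau : {perm 'I_n.+1}) : {perm 'I_n.+1} :=
  (tau * sigma)%g.

Lemma zpermE (n : nat) (h i : 'I_n.+1) : zperm h i = (i + h)%R.
Proof. by rewrite /zperm permE. Qed.
Lemma comp_permE (n : nat) (sigma tau : {perm 'I_n.+1}) i : comp_perm sigma tau i = sigma (tau i).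
Proof. by rewrite /comp_perm permM. Qed.

(* Attach to each parameter x the rigid motion [frame x] carrying the origin and the
   direction e1 to gam x and the unit tangent there. The motion that places arc p of
   r_{sigma,C} telescopes: it equals frame(a_0) G_{sigma 0} ... G_{sigma (p-1)} frame(a_p)^-1,
   where G_j = frame(c_j)^-1 frame(c_{j+1}) depends on arc j alone. Comparing the frames at
   both ends, r_{sigma,C} is closed C^1 exactly when G_{sigma 0} ... G_{sigma (k-1)} = 1.
   Precomposing sigma with z_h rotates this word cyclically, and in a group xy = 1 iff yx = 1. *)

From HB Require Import structures.
From Pilot Require Import Defs.
From Stdlib Require Import Reals ZArith Lra.
From mathcomp Require Import all_boot all_fingroup.
From mathcomp Require Import ssralg zmodp zify.

Local Open Scope R_scope.

(* (w, t) stands for the map [rigid w t], and [rm_mul] is composition. *)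
Definition rmotion := (pt * pt)%type.
Definition rm_one : rmotion := ((1, 0), (0, 0)).
Definition rm_mul (A B : rmotion) : rmotion := (cmul A.1 B.1, padd (cmul A.1 B.2) A.2).
Definition rm_prod (s : seq rmotion) : rmotion := foldr rm_mul rm_one s.

Definition cconj (u : pt) : pt := (u.1, - u.2).
Definition unit_length (u : pt) : Prop := u.1 * u.1 + u.2 * u.2 = 1.
Definition rm_inv (A : rmotion) : rmotion :=
  (cconj A.1, pscale (-1) (cmul (cconj A.1) A.2)).

Ltac rm_ring :=
  rewrite /rm_mul /rm_one /rm_inv /cmul /padd /pscale /cconj /=;
  f_equal; f_equal; ring.

Lemma rm_mulA (A B C : rmotion) : rm_mul (rm_mul A B) C = rm_mul A (rm_mul B C).
Proof.
by case: A => [[? ?] [? ?]]; case: B => [[? ?] [? ?]]; case: C => [[? ?] [? ?]]; rm_ring.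
Qed.

Lemma rm_mul1m (A : rmotion) : rm_mul rm_one A = A.
Proof. case: A => [[? ?] [? ?]]; rm_ring. Qed.

Lemma rm_mulm1 (A : rmotion) : rm_mul A rm_one = A.
Proof. case: A => [[? ?] [? ?]]; rm_ring. Qed.

Lemma rm_prod_cat (s1 s2 : seq rmotion) :
  rm_prod (s1 ++ s2) = rm_mul (rm_prod s1) (rm_prod s2).
Proof. by elim: s1 => [|A s IH] /=; rewrite ?rm_mul1m // IH rm_mulA. Qed.

(* Left inverses are right inverses, because the rotation parts multiply commutatively. *)
Lemma rm_mul_eq1C (A B : rmotion) : rm_mul A B = rm_one -> rm_mul B A = rm_one.
Proof.
case: A => [[a1 a2] [a3 a4]]; case: B => [[b1 b2] [b3 b4]].
rewrite /rm_mul /rm_one /cmul /padd /= => -[e1 e2 e3 e4].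
have -> : a3 = - (a1 * b3 - a2 * b4) by lra.
have -> : a4 = - (a1 * b4 + a2 * b3) by lra.
f_equal; f_equal; [lra | lra | |].
- transitivity ((1 - (a1 * b1 - a2 * b2)) * b3 + (a1 * b2 + a2 * b1) * b4); first ring.
  by rewrite e1 e2; ring.
- transitivity ((1 - (a1 * b1 - a2 * b2)) * b4 - (a1 * b2 + a2 * b1) * b3); first ring.
  by rewrite e1 e2; ring.
Qed.

Lemma rm_prod_rot_eq1 (h : nat) (s : seq rmotion) :
  rm_prod (rot h s) = rm_one <-> rm_prod s = rm_one.
Proof.
rewrite /rot -{3}(cat_take_drop h s) !rm_prod_cat.
by split; apply: rm_mul_eq1C.
Qed.

Lemma rm_mulVm (A : rmotion) : unit_length A.1 -> rm_mul (rm_inv A) A = rm_one.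
Proof.
case: A => [[w1 w2] [t1 t2]]; rewrite /unit_length /= => w_unit.
rewrite /rm_mul /rm_one /rm_inv /cmul /padd /pscale /cconj /=.
f_equal; f_equal; first [lra | ring].
Qed.

Lemma rm_mulmV (A : rmotion) : unit_length A.1 -> rm_mul A (rm_inv A) = rm_one.
Proof. by move=> A_unit; apply/rm_mul_eq1C/rm_mulVm. Qed.

Lemma rm_mul_eq_left (A B : rmotion) :
  unit_length A.1 -> rm_mul A B = A <-> B = rm_one.
Proof.
move=> A_unit; split=> [AB_A | ->]; last exact: rm_mulm1.
by rewrite -[B]rm_mul1m -(rm_mulVm A A_unit) rm_mulA AB_A.
Qed.

Lemma cdiv_unit_length (u v : pt) : unit_length v -> cdiv u v = cmul u (cconj v).
Proof.
case: u v => [u1 u2] [v1 v2]; rewrite /unit_length /cdiv /= => ->.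
by rewrite Rinv_1 /pscale /cmul /cconj /=; f_equal; ring.
Qed.

Lemma cmul_pscale (w u : pt) (r : R) : cmul w (pscale r u) = pscale r (cmul w u).
Proof. by case: w u => [? ?] [? ?]; rewrite /cmul /pscale /=; f_equal; ring. Qed.

Lemma pscale_inj {r : R} : r <> 0 -> injective (pscale r).
Proof.
move=> r_neq0 [u1 u2] [v1 v2]; rewrite /pscale /= => -[e1 e2].
by f_equal; apply: (Rmult_eq_reg_l r).
Qed.

Lemma pnorm_polar (c t : R) : 0 <= c -> pnorm (c * cos t, c * sin t) = c.
Proof.
move=> c_ge0; rewrite /pnorm /=.
have -> : c * cos t * (c * cos t) + c * sin t * (c * sin t)
        = c * c * (Rsqr (sin t) + Rsqr (cos t)) by rewrite /Rsqr; ring.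
by rewrite sin2_cos2 Rmult_1_r sqrt_square.
Qed.

Lemma unit_length_unitv (u : pt) : pnorm u <> 0 -> unit_length (unitv u).
Proof.
move=> u_neq0; have sq : u.1 * u.1 + u.2 * u.2 = pnorm u * pnorm u.
  by rewrite /pnorm sqrt_sqrt //; nra.
rewrite /unit_length /unitv /pscale /=.
transitivity ((u.1 * u.1 + u.2 * u.2) / (pnorm u * pnorm u)); first by field.
by rewrite sq; field.
Qed.

Lemma pscale_unitv (u : pt) : pnorm u <> 0 -> pscale (pnorm u) (unitv u) = u.
Proof.
move=> u_neq0; rewrite /unitv /pscale /=.
by case: u u_neq0 => u1 u2 /= u_neq0; f_equal; field.
Qed.

HB.instance Definition _ := Monoid.isComLaw.Build R 0 Rplus
  (fun x y z => esym (Rplus_assoc x y z)) Rplus_comm Rplus_0_l.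

Section Rearrangement.
Variables (gam dgam : R -> pt) (c : R).
Hypotheses (c_gt0 : 0 < c) (speed : forall x, 0 <= x <= 1 -> pnorm (dgam x) = c).
Variables (n : nat) (sigma : {perm 'I_n.+1}) (cp : nat -> R).
Hypothesis cuts_cp : cuts n.+1 cp.

Lemma cuts_le i j : (i <= j <= n.+1)%N -> cp i <= cp j.
Proof.
case: cuts_cp => _ [_ cp_incr]; elim: j => [|j IH] /andP[le_ij le_jn].
  by move: le_ij; rewrite leqn0 => /eqP ->; lra.
move: le_ij; rewrite leq_eqVlt ltnS => /orP[/eqP -> | le_ij]; first lra.
have := cp_incr j le_jn; have := IH; rewrite le_ij (ltnW le_jn) => /(_ isT); lra.
Qed.

Lemma cuts_01 i : (i <= n.+1)%N -> 0 <= cp i <= 1.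
Proof.
case: cuts_cp => cp0 [cp1 _] le_in.
have := @cuts_le 0 i; have := @cuts_le i n.+1; rewrite le_in leqnn /= cp0 cp1.
by move=> /(_ isT) ? /(_ isT) ?; lra.
Qed.

Lemma arc_a_01 p : 0 <= arc_a sigma cp p <= 1.
Proof. exact: cuts_01 (ltnW (ltn_ord _)). Qed.

Lemma arc_b_01 p : 0 <= arc_b sigma cp p <= 1.
Proof. exact: cuts_01 (ltn_ord _). Qed.

Lemma arc_len_ge0 p : 0 <= arc_len sigma cp p.
Proof.
have := @cuts_le (sidx sigma p) (sidx sigma p).+1.
by rewrite leqnSn ltn_ord /arc_len /arc_b /arc_a => /(_ isT); lra.
Qed.

Lemma start_time_ge0 p : 0 <= start_time sigma cp p.
Proof. by elim: p => [|p IH] /=; [lra | have := arc_len_ge0 p; lra]. Qed.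

Lemma start_time_sum p :
  start_time sigma cp p = \big[Rplus/0]_(0 <= i < p) arc_len sigma cp i.
Proof. by elim: p => [|p IH] /=; rewrite ?big_nil // big_nat_recr //= IH. Qed.

(* The arcs are a permutation of the pieces of [0, 1], so their lengths add up to 1. *)
Lemma start_time_last : start_time sigma cp n + arc_len sigma cp n = 1.
Proof.
rewrite -[LHS]/(start_time sigma cp n.+1) start_time_sum big_mkord.
rewrite (eq_bigr (fun i : 'I_n.+1 => cp (sigma i).+1 - cp (sigma i))); last first.
  by move=> i _; rewrite /arc_len /arc_b /arc_a /sidx inord_val.
rewrite -(reindex_inj (P := xpredT) (F := fun i : 'I_n.+1 => cp i.+1 - cp i)
                      (@perm_inj _ sigma)).
rewrite -(big_mkord xpredT (fun i => cp i.+1 - cp i)).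
rewrite (telescope_big (fun i j => cp j - cp i)) => [|k _]; last by rewrite /=; ring.
by case: cuts_cp => cp0 [cp1 _] /=; rewrite cp0 cp1; ring.
Qed.

Lemma piece_1 : piece sigma cp 1 = n.
Proof.
have pick_top p : start_time sigma cp p <= 1 -> Defs.pick sigma cp p 1 = p.
  by case: p => //= p le1; case: Rle_dec.
by apply: pick_top; have := arc_len_ge0 n; have := start_time_last; lra.
Qed.

Lemma start_time_piece_0 : start_time sigma cp (piece sigma cp 0) = 0.
Proof.
have pick_0 p : Defs.pick sigma cp p 0 = 0%N \/
                start_time sigma cp (Defs.pick sigma cp p 0) <= 0.
  by elim: p => [|q IH] /=; [left | case: Rle_dec; [right|]].
rewrite /piece; case: (pick_0 n) => [-> // | le0].
by have := start_time_ge0 (Defs.pick sigma cp n 0); lra.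
Qed.

Definition frame (x : R) : rmotion := (unitv (dgam x), gam x).
Definition arc_motion (j : nat) : rmotion :=
  rm_mul (rm_inv (frame (cp j))) (frame (cp j.+1)).
Definition arcs_motion (p : nat) : rmotion :=
  rm_prod [seq arc_motion (sidx sigma q) | q <- iota 0 p].
Definition with_speed (A : rmotion) : pt * pt := (pscale c A.1, A.2).

Lemma with_speed_inj : injective with_speed.
Proof.
move=> A B eqAB; have eq2 : A.2 = B.2 := f_equal snd eqAB.
have eq1 : A.1 = B.1.
  by apply: (pscale_inj (Rgt_not_eq _ _ c_gt0)); exact: (f_equal fst eqAB).
by rewrite [A]surjective_pairing [B]surjective_pairing eq1 eq2.
Qed.

Lemma frame_unit {x : R} : 0 <= x <= 1 -> unit_length (frame x).1.
Proof. by move=> x01; apply: unit_length_unitv; rewrite speed //; lra. Qed.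

Lemma dgam_frame {x : R} : 0 <= x <= 1 -> dgam x = pscale c (frame x).1.
Proof. by move=> x01; rewrite /= -(speed x x01) pscale_unitv // speed //; lra. Qed.

Lemma motion_succ q :
  motion gam dgam sigma cp q.+1 =
  rm_mul (rm_mul (motion gam dgam sigma cp q) (frame (arc_b sigma cp q)))
         (rm_inv (frame (arc_a sigma cp q.+1))).
Proof.
rewrite [LHS]/= cdiv_unit_length; last exact: frame_unit (arc_a_01 _).
rewrite /rm_mul /rm_inv /frame /rigid /cconj /cmul /padd /psub /pscale /=.
by f_equal; f_equal; ring.
Qed.

Lemma arcs_motion_succ p :
  arcs_motion p.+1 = rm_mul (arcs_motion p) (arc_motion (sidx sigma p)).
Proof.
by rewrite /arcs_motion -addn1 iotaD map_cat rm_prod_cat /= rm_mulm1 add0n.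
Qed.

Lemma frame_arc_motion p :
  rm_mul (frame (arc_a sigma cp p)) (arc_motion (sidx sigma p)) = frame (arc_b sigma cp p).
Proof. by rewrite /arc_motion -rm_mulA rm_mulmV ?rm_mul1m //; apply/frame_unit/arc_a_01. Qed.

Lemma motion_frame p :
  rm_mul (motion gam dgam sigma cp p) (frame (arc_a sigma cp p)) =
  rm_mul (frame (arc_a sigma cp 0)) (arcs_motion p).
Proof.
elim: p => [|p IH]; first by rewrite /arcs_motion /= rm_mul1m rm_mulm1.
rewrite motion_succ rm_mulA rm_mulVm ?rm_mulm1; last exact/frame_unit/arc_a_01.
by rewrite -frame_arc_motion -rm_mulA IH rm_mulA -arcs_motion_succ.
Qed.

Lemma motion_frame_end p :
  rm_mul (motion gam dgam sigma cp p) (frame (arc_b sigma cp p)) =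
  rm_mul (frame (arc_a sigma cp 0)) (arcs_motion p.+1).
Proof. by rewrite -frame_arc_motion -rm_mulA motion_frame rm_mulA -arcs_motion_succ. Qed.

Lemma arcs_motion_degenerate {p : nat} :
  start_time sigma cp p = 0 -> arcs_motion p = rm_one.
Proof.
elim: p => [|p IH] //= st0.
have := start_time_ge0 p; have := arc_len_ge0 p => len_ge0 st_ge0.
rewrite arcs_motion_succ IH; last lra.
rewrite rm_mul1m /arc_motion.
have -> : cp (sidx sigma p).+1 = cp (sidx sigma p).
  by move: st0 len_ge0; rewrite /arc_len /arc_b /arc_a; lra.
exact/rm_mulVm/frame_unit/arc_a_01.
Qed.

Lemma rtangent_rcurve_piece {s : R} {p : nat} {x : R} :
  piece sigma cp s = p -> x = arc_a sigma cp p + (s - start_time sigma cp p) ->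
  0 <= x <= 1 ->
  (rtangent gam dgam sigma cp s, rcurve gam dgam sigma cp s) =
  with_speed (rm_mul (motion gam dgam sigma cp p) (frame x)).
Proof.
move=> piece_s -> x01.
by rewrite /rtangent /rcurve piece_s /with_speed (dgam_frame x01) cmul_pscale.
Qed.

Lemma closed_rearrP : closed_rearr gam dgam sigma cp <-> arcs_motion n.+1 = rm_one.
Proof.
have end_frame : (rtangent gam dgam sigma cp 1, rcurve gam dgam sigma cp 1) =
                 with_speed (rm_mul (frame (arc_a sigma cp 0)) (arcs_motion n.+1)).
  rewrite -motion_frame_end; apply: (rtangent_rcurve_piece piece_1 _ (arc_b_01 n)).
  by have := start_time_last; rewrite /arc_len; lra.
have start_frame : (rtangent gam dgam sigma cp 0, rcurve gam dgam sigma cp 0) =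
                   with_speed (frame (arc_a sigma cp 0)).
  rewrite -[frame _]rm_mulm1 -(arcs_motion_degenerate start_time_piece_0) -motion_frame.
  by apply: (rtangent_rcurve_piece erefl _ (arc_a_01 _)); rewrite start_time_piece_0; ring.
rewrite -(rm_mul_eq_left _ _ (frame_unit (arc_a_01 0))); split=> [[r1 t1] | eqF].
  by apply: with_speed_inj; rewrite -end_frame -start_frame r1 t1.
have := end_frame; rewrite eqF -start_frame => frames_eq.
by split; [exact: (congr1 snd frames_eq) | exact: (congr1 fst frames_eq)].
Qed.

End Rearrangement.

Lemma rot_iota (h k : nat) :
  (h <= k)%N -> rot h (iota 0 k) = [seq (i + h) %% k | i <- iota 0 k]%N.
Proof.
move=> le_hk; rewrite /rot drop_iota take_iota add0n (minn_idPl le_hk).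
rewrite -{3}(subnK le_hk) iotaD map_cat add0n; congr (_ ++ _).
  rewrite -[h in iota h]addn0 iotaDl; apply/eq_in_map => i; rewrite mem_iota => lt_i.
  by rewrite modn_small; lia.
rewrite -[(k - h)%N]addn0 iotaDl -map_comp -[LHS]map_id.
apply/eq_in_map => i; rewrite mem_iota => lt_i /=.
by rewrite (_ : (k - h + i + h = i + k)%N) ?modnDr ?modn_small //; lia.
Qed.

Lemma sidx_comp_zperm n (sigma : {perm 'I_n.+1}) (h : 'I_n.+1) i :
  (i < n.+1)%N -> sidx (comp_perm sigma (zperm h)) i = sidx sigma ((i + h) %% n.+1)%N.
Proof.
move=> lt_i; rewrite /sidx comp_permE zpermE; congr (nat_of_ord (sigma _)).
by apply: val_inj; rewrite /= !inordK // ltn_pmod.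
Qed.

Lemma arcs_motion_zperm gam dgam n (sigma : {perm 'I_n.+1}) (h : 'I_n.+1) cp :
  arcs_motion gam dgam n (comp_perm sigma (zperm h)) cp n.+1 =
  rm_prod (rot h [seq arc_motion gam dgam cp (sidx sigma q) | q <- iota 0 n.+1]).
Proof.
rewrite /arcs_motion -map_rot rot_iota ?(ltnW (ltn_ord h)) // -map_comp.
by congr rm_prod; apply/eq_in_map => i; rewrite mem_iota => lt_i /=; rewrite sidx_comp_zperm.
Qed.

Theorem lemma4p3 (gam dgam : R -> R * R) (c : R) (theta : R -> R) (m : Z)
    (n : nat) (sigma : {perm 'I_n.+1}) (h : 'I_n.+1) :
  0 < c ->
  has_deriv01 gam dgam ->
  cont01 theta ->
  (forall s, 0 <= s <= 1 -> dgam s = (c * cos (theta s), c * sin (theta s))) ->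
  gam 0 <> gam 1 ->
  theta 1 - theta 0 = 2 * PI * IZR m ->
  m <> 0%Z ->
  (rearrangeable gam dgam sigma <-> rearrangeable gam dgam (comp_perm sigma (zperm h))).
Proof.
move=> c_gt0 _ _ dgamE _ _ _.
have speed s : 0 <= s <= 1 -> pnorm (dgam s) = c.
  by move=> s01; rewrite dgamE // pnorm_polar //; lra.
have closedP := closed_rearrP gam dgam c c_gt0 speed n.
split=> -[cp [cuts_cp /(closedP _ _ cuts_cp) closed]]; exists cp; split=> //.
  by apply/(closedP _ _ cuts_cp); rewrite arcs_motion_zperm rm_prod_rot_eq1.
by apply/(closedP _ _ cuts_cp); move: closed; rewrite arcs_motion_zperm rm_prod_rot_eq1.
Qed.
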